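(* Let $\mu$ be a differentiable growth rate and $\gamma\in\mathbb R$. If the system $x'=(A(t)-\gamma\frac{\mu'(t)}{\mu(t)}I)x$ admits a nonuniform $\mu$-dichotomy with invariant projections $P(t)$, then $\mathcal U_\gamma=\{(s,\xi):\xi\in\operatorname{Im}P(s)\}$, $\mathcal V_\gamma=\{(s,\xi):\xi\in\operatorname{Ker}P(s)\}$, and $\mathcal U_\gamma\oplus\mathcal V_\gamma=\mathbb R\times\mathbb R^n$.
   Context: Fix $n\ge1$ and a norm on $\mathbb R^n$ with induced operator norm. Let $A:\mathbb R\to M_n(\mathbb R)$ be continuous with evolution operator $\Phi(t,s)$. $\operatorname{sign}(s)\in\{-1,0,1\}$ is the sign of $s$. A growth rate is a strictly increasing $\mu:\mathbb R\to(0,\infty)$, $\mu(0)=1$, $\mu\to+\infty$ at $+\infty$, $\mu\to0$ at $-\infty$; differentiable growth rate if differentiable. A linear system $x'=C(t)x$ with evolution operator $\Psi$ admits a nonuniform $\mu$-dichotomy with invariant projections $P(t)$ if $P(t)$ are projections with $P(t)\Psi(t,s)=\Psi(t,s)P(s)$ for all $t,s$ and there are constants $K\ge1$, $\alpha<0$, $\beta>0$, $\theta,\nu\ge0$, $\alpha+\theta<0$, $\beta-\nu>0$ with ($Q=I-P$) $\|\Psi(t,s)P(s)\|\le K(\mu(t)/\mu(s))^{\alpha}\mu(s)^{\operatorname{sign}(s)\theta}$ for $t\ge s$ and $\|\Psi(t,s)Q(s)\|\le K(\mu(t)/\mu(s))^{\beta}\mu(s)^{\operatorname{sign}(s)\nu}$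 for $t\le s$. $\mathcal U_\gamma=\{(s,\xi):\sup_{t\ge0}\|\Phi(t,s)\xi\|\mu(t)^{-\gamma}<\infty\}$ and $\mathcal V_\gamma=\{(s,\xi):\sup_{t\le0}\|\Phi(t,s)\xi\|\mu(t)^{-\gamma}<\infty\}$ ($\Phi$ is the evolution operator of $x'=A(t)x$). The sum $\mathcal U\oplus\mathcal V$ of subsets of $\mathbb R\times\mathbb R^n$ is taken fiberwise: $\{(s,\xi):\xi\in\mathcal U(s)+\mathcal V(s)\}$ with $\mathcal U(s)\cap\mathcal V(s)=\{0\}$, where $\mathcal U(s)=\{\xi:(s,\xi)\in\mathcal U\}$. *)

From HB Require Import structures.
From mathcomp Require Import all_boot all_order all_algebra.
From mathcomp Require Import all_classical all_reals all_analysis.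
Set Implicit Arguments. Unset Strict Implicit. Unset Printing Implicit Defensive.
Import Order.TTheory GRing.Theory Num.Theory.
Import numFieldNormedType.Exports.
Local Open Scope classical_set_scope.
Local Open Scope ring_scope.

Definition is_norm (R : realType) (n : nat) (N : 'cV[R]_n -> R) : Prop :=
  (forall x, 0 <= N x) /\ (forall x, N x = 0 -> x = 0) /\
  (forall (a : R) x, N (a *: x) = `|a| * N x) /\
  (forall x y, N (x + y) <= N x + N y).

Definition opnorm (R : realType) (n : nat) (N : 'cV[R]_n -> R) (M : 'M[R]_n) : R :=
  sup [set N (M *m x) | x in [set x | N x <= 1]].

Definition growth_rate (R : realType) (mu : R -> R) : Prop :=
  (forall s t, s < t -> mu s < mu t) /\ (forall t, 0 < mu t) /\ mu 0 = 1 /\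
  (mu x @[x --> +oo] --> +oo) /\ (mu x @[x --> -oo] --> 0).

Definition diff_growth_rate (R : realType) (mu : R -> R) : Prop :=
  growth_rate mu /\ forall t : R, derivable mu t (1 : R).

Definition is_evol_op (R : realType) (n : nat) (A : R -> 'M[R]_n)
  (Phi : R -> R -> 'M[R]_n) : Prop :=
  forall s, Phi s s = 1%:M /\
   forall (t : R) (i j : 'I_n), is_derive t (1 : R) (fun u => Phi u s i j) ((A t *m Phi t s) i j).

Definition sgnR (R : realType) (s : R) : R := Num.sg s.

Definition nonuniform_mu_dichotomy (R : realType) (n : nat) (N : 'cV[R]_n -> R)
  (mu : R -> R) (Psi : R -> R -> 'M[R]_n) (P : R -> 'M[R]_n) : Prop :=
  (forall t, P t *m P t = P t) /\
  (forall t s, P t *m Psi t s = Psi t s *m P s) /\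
  exists K alpha beta theta nu : R,
    1 <= K /\ alpha < 0 /\ 0 < beta /\ 0 <= theta /\ 0 <= nu /\
    alpha + theta < 0 /\ 0 < beta - nu /\
    (forall t s, s <= t ->
       opnorm N (Psi t s *m P s) <=
       K * ((mu t / mu s) `^ alpha) * (mu s `^ (sgnR s * theta))) /\
    (forall t s, t <= s ->
       opnorm N (Psi t s *m (1%:M - P s)) <=
       K * ((mu t / mu s) `^ beta) * (mu s `^ (sgnR s * nu))).

Definition U_set (R : realType) (n : nat) (N : 'cV[R]_n -> R) (mu : R -> R)
  (Phi : R -> R -> 'M[R]_n) (gamma : R) : set (R * 'cV[R]_n) :=
  [set p | exists C : R, forall t, 0 <= t ->
      N (Phi t p.1 *m p.2) * (mu t `^ (- gamma)) <= C].

Definition V_set (R : realType) (n : nat) (N : 'cV[R]_n -> R) (mu : R -> R)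
  (Phi : R -> R -> 'M[R]_n) (gamma : R) : set (R * 'cV[R]_n) :=
  [set p | exists C : R, forall t, t <= 0 ->
      N (Phi t p.1 *m p.2) * (mu t `^ (- gamma)) <= C].

Definition fiber_dsum (R : realType) (n : nat) (U V : set (R * 'cV[R]_n))
  : set (R * 'cV[R]_n) :=
  [set p | (forall x, U (p.1, x) -> V (p.1, x) -> x = 0) /\
           exists u v, U (p.1, u) /\ V (p.1, v) /\ p.2 = u + v].

From HB Require Import structures.
From mathcomp Require Import all_boot all_order all_algebra.
From mathcomp Require Import all_classical all_reals all_analysis.
From mathcomp Require Import lra ring.
Import Order.TTheory GRing.Theory Num.Theory.
Import numFieldNormedType.Exports.
Local Open Scope classical_set_scope.
Local Open Scope ring_scope.
Set Implicit Arguments. Unset Strict Implicit. Unset Printing Implicit Defensive.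

(* Both [mu t `^ gamma *: Psi t s] and [mu s `^ gamma *: Phi t s] solve
   [x' = A x] and agree at [t = s], so they coincide by uniqueness (a Gronwall
   estimate on the sum of squares of the entries). Hence [U_gamma] and
   [V_gamma] consist of the data whose [Psi]-orbits are bounded forward,
   resp. backward. The dichotomy estimates make [Im P] forward bounded and
   [Ker P] backward bounded; conversely, pulling a forward bounded orbit of
   [y \in Ker P s] back from time [t] gives [N y <= c * mu t `^ (nu - beta)],
   which tends to [0], and symmetrically for [Im P] backward. *)

Section Norm.
Variables (R : realType) (n : nat) (N : 'cV[R]_n -> R).
Hypothesis hN : is_norm N.

Lemma N_ge0 x : 0 <= N x. Proof. by have [h _] := hN. Qed.
Lemma N0_eq0 x : N x = 0 -> x = 0. Proof. by have [_ [h _]] := hN; apply: h. Qed.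
Lemma NZ a x : N (a *: x) = `|a| * N x. Proof. by have [_ [_ [h _]]] := hN. Qed.
Lemma ler_ND x y : N (x + y) <= N x + N y. Proof. by have [_ [_ [_ h]]] := hN. Qed.

Lemma N0 : N 0 = 0. Proof. by rewrite -(scale0r 0) NZ normr0 mul0r. Qed.
Lemma NN x : N (- x) = N x. Proof. by rewrite -scaleN1r NZ normrN normr1 mul1r. Qed.
Lemma ler_NB x y : N (x - y) <= N x + N y. Proof. by have := ler_ND x (- y); rewrite NN. Qed.

Lemma ler_N_sum m (f : 'I_m -> 'cV[R]_n) : N (\sum_(j < m) f j) <= \sum_(j < m) N (f j).
Proof.
elim/big_ind2: _ => [|a b c d h1 h2|//]; first by rewrite N0.
exact: le_trans (ler_ND _ _) (lerD h1 h2).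
Qed.

Lemma mx_entry_le_norm (p q : nat) (x : 'M[R]_(p, q)) i j : `|x i j| <= `|x|.
Proof.
change (`|x i j| <= mx_norm x); rewrite mx_normrE; apply/bigmax_geP; right.
by exists (i, j).
Qed.

Let Nmax := \sum_(i < n) N (delta_mx i 0).

Lemma N_le_mx_norm x : N x <= `|x| * Nmax.
Proof.
rewrite {1}(matrix_sum_delta x) /Nmax mulr_sumr.
apply: le_trans (ler_N_sum _) (ler_sum _ _) => i _.
by rewrite big_ord1 NZ ler_wpM2r ?N_ge0 ?mx_entry_le_norm.
Qed.

Lemma Nmax_ge0 : 0 <= Nmax. Proof. by apply: sumr_ge0 => i _; apply: N_ge0. Qed.

Lemma N_lipschitz a b : `|N a - N b| <= `|a - b| * Nmax.
Proof.
have lip u v : N u - N v <= `|u - v| * Nmax.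
  rewrite lerBlDr -{1}(subrK v u).
  exact: le_trans (ler_ND _ _) (lerD (N_le_mx_norm _) (lexx _)).
by rewrite ler_norml lip andbT lerNl opprB -normrN opprB lip.
Qed.

Lemma mx_normT_le (p q : nat) (x : 'M[R]_(p, q)) : `|x^T| <= `|x|.
Proof.
change (mx_norm x^T <= `|x|); rewrite mx_normrE.
apply/bigmax_leP; split=> [|[i j] _ /=]; first exact: normr_ge0.
by rewrite mxE mx_entry_le_norm.
Qed.

Lemma NT_continuous : continuous (fun v : 'rV[R]_n => N v^T).
Proof.
move=> x; apply/(@cvgrPdist_le _ _ _ _ (nbhs_filter x)) => e e0.
have Nmax1_gt0 : 0 < Nmax + 1 by rewrite ltr_wpDl ?Nmax_ge0.
near=> y; apply: le_trans (N_lipschitz _ _) _.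
apply: le_trans (_ : `|x - y| * (Nmax + 1) <= e).
  rewrite -linearB /=; apply: ler_pM; rewrite ?normr_ge0 ?Nmax_ge0 ?mx_normT_le //.
  by rewrite lerDl.
rewrite -ler_pdivlMr //; near: y.
exact: (@cvgr_dist_le _ _ _ _ (nbhs_filter x) _ _ cvg_id _ (divr_gt0 e0 Nmax1_gt0)).
Unshelve. all: by end_near.
Qed.

(* Compactness of the unit sphere is only available for row vectors. *)
Lemma N_ge_entry : (0 < n)%N ->
  exists2 m, 0 < m & forall (x : 'cV[R]_n) i, m * `|x i 0| <= N x.
Proof.
move=> n0; pose S := [set v : 'rV[R]_n | `|v| = 1].
have S_compact : compact S.
  apply: bounded_closed_compact.
    by apply: filterS (nbhs_pinfty_ge (num_real (1:R))) => M M1 v /= ->.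
  apply: (@preimage_closed _ R (fun v => `|v|) [set 1]); last exact: closed_eq.
  by move=> v _; apply: norm_continuous.
have normalize v : v != 0 -> S (`|v|^-1 *: v).
  by move=> v0; rewrite /S /= normrZ normfV normr_id mulVf ?normr_eq0.
have one_neq0 : const_mx 1 != 0 :> 'rV[R]_n.
  apply/eqP => /matrixP /(_ 0 (Ordinal n0)); rewrite !mxE.
  by move/eqP; rewrite oner_eq0.
have [c Sc cmin] := compact_EVT_min (ex_intro _ _ (normalize _ one_neq0)) S_compact
  (continuous_subspaceT NT_continuous).
have Nc_gt0 : 0 < N c^T.
  rewrite lt_def N_ge0 andbT; apply/eqP => /N0_eq0/eqP; rewrite trmx_eq0 => /eqP c0.
  by move: Sc; rewrite inE /S /= c0 normr0 => /esym/eqP; rewrite oner_eq0.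
exists (N c^T) => // x i; have [x0|x0] := eqVneq x^T 0.
  by rewrite -[x]trmxK x0 trmx0 mxE normr0 mulr0 N_ge0.
have xi_le : `|x i 0| <= `|x^T| by have := mx_entry_le_norm x^T 0 i; rewrite mxE.
apply: le_trans (ler_wpM2l (ltW Nc_gt0) xi_le) _.
have := cmin _ (mem_set (normalize _ x0)); rewrite linearZ /= trmxK NZ normfV normr_id.
by rewrite -ler_pdivlMr ?normr_gt0 // mulrC.
Qed.

Lemma opnorm_le : (0 < n)%N -> forall (M : 'M[R]_n) x, N (M *m x) <= opnorm N M * N x.
Proof.
move=> n0 M x; have [m m0 hm] := N_ge_entry n0.
pose c := (\sum_(j < n) N (col j M)) / m.
have c_ge0 : 0 <= c by apply: divr_ge0 (ltW m0); apply: sumr_ge0 => j _; apply: N_ge0.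
have mulmx_le y : N (M *m y) <= c * N y.
  have -> : M *m y = \sum_j y j 0 *: col j M.
    apply/matrixP => i k; rewrite !mxE summxE; apply: eq_bigr => j _.
    by rewrite !mxE (ord1 k) mulrC.
  apply: le_trans (ler_N_sum _) _; rewrite /c !mulr_suml; apply: ler_sum => j _.
  by rewrite NZ mulrC -mulrA ler_wpM2l ?N_ge0 // mulrC ler_pdivlMr // mulrC hm.
pose B := [set N (M *m y) | y in [set y | N y <= 1]].
have B_sup : has_sup B.
  split; first by exists (N (M *m 0)), 0 => //=; rewrite N0 ler01.
  exists c => _ [z /= z1 <-].
  by apply: le_trans (mulmx_le z) _; rewrite -[leRHS]mulr1 ler_wpM2l.
have [Nx0|Nx0] := eqVneq (N x) 0; first by rewrite (N0_eq0 Nx0) mulmx0 N0 mulr0.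
have Nx_gt0 : 0 < N x by rewrite lt_def Nx0 N_ge0.
have : B (N (M *m ((N x)^-1 *: x))).
  by exists ((N x)^-1 *: x) => //=; rewrite NZ ger0_norm ?invr_ge0 ?N_ge0 ?mulVf.
move/(sup_upper_bound B_sup); rewrite -scalemxAr NZ ger0_norm ?invr_ge0 ?N_ge0 //.
by move=> h; rewrite -ler_pdivrMr // mulrC.
Qed.

End Norm.

Lemma is_derive1_comp (R : realType) (f g : R -> R) (x df dg : R) :
  is_derive x (1 : R) f df -> is_derive (f x) (1 : R) g dg ->
  is_derive x (1 : R) (g \o f) (dg * df).
Proof.
move=> [f_der f_val] [g_der g_val]; apply: DeriveDef.
  by apply/derivable1_diffP; apply: differentiable_comp; apply/derivable1_diffP.
by rewrite -derive1E derive1_comp // !derive1E f_val g_val.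
Qed.

Lemma is_derive_expR_mul (R : realType) (f : R -> R) (k u df : R) :
  is_derive u (1 : R) f df ->
  is_derive u (1 : R) (fun v => expR (k * v) * f v) (expR (k * u) * (df + k * f u)).
Proof.
move=> f_der.
have exp_der : is_derive u (1 : R) (fun v => expR (k * v)) (expR (k * u) * k).
  have lin_der : is_derive u (1 : R) (k \*: @id R) (k *: 1) by apply: is_deriveZ.
  have := is_derive1_comp lin_der (is_derive_expR _).
  have -> : expR \o (k \*: @id R) = (fun v => expR (k * v)) by [].
  by move/is_derive_eq; apply; rewrite /GRing.scale /= mulr1.
have := is_deriveM exp_der f_der; move/is_derive_eq; apply.
by rewrite /GRing.scale /=; ring.
Qed.

(* Gronwall: [expR (- c * u) * f u] is nonincreasing and [expR (c * u) * f u]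
   nondecreasing on [a, b]. *)
Lemma derive_le_mul_eq0 (R : realType) (f df : R -> R) (c a b : R) : a <= b ->
  (forall u, is_derive u (1 : R) f (df u)) -> (forall u, 0 <= f u) ->
  {in `]a, b[, forall u, `|df u| <= c * f u} ->
  (f a = 0 -> f b = 0) /\ (f b = 0 -> f a = 0).
Proof.
move=> ab f_der f_ge0 df_le.
pose g k u := expR (k * u) * f u.
have g_der k u : is_derive u (1 : R) (g k) (expR (k * u) * (df u + k * f u)).
  exact: is_derive_expR_mul.
have g_derivable k u : derivable (g k) u (1 : R) by have [] := g_der k u.
have g'E k u : 'D_1 (g k) u = expR (k * u) * (df u + k * f u) by have [] := g_der k u.
have g_cont k : {within `[a, b], continuous (g k)}.
  by apply: derivable_within_continuous => u _.
have g_ge0 k u : 0 <= g k u by rewrite mulr_ge0 ?expR_ge0.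
have g_eq0 k u : g k u <= 0 -> f u = 0.
  move=> gu; have /eqP : g k u = 0 by apply/le_anti; rewrite gu g_ge0.
  by rewrite mulf_eq0 gt_eqF ?expR_gt0 //= => /eqP.
have a_in : a \in `[a, b] by rewrite in_itv /= lexx ab.
have b_in : b \in `[a, b] by rewrite in_itv /= lexx ab.
split=> [fa0|fb0].
- have : g (- c) b <= g (- c) a.
    apply: (ler0_derive1_le_cc _ _ (g_cont _) b_in a_in ab) => [u _ //|u uab].
    rewrite derive1E g'E mulr_ge0_le0 ?expR_ge0 //.
    by rewrite mulNr subr_le0 (le_trans (ler_norm _) (df_le _ uab)).
  by rewrite /g fa0 mulr0 => /g_eq0.
- have : g c a <= g c b.
    apply: (ger0_derive1_le_cc _ _ (g_cont _) a_in b_in ab) => [u _ //|u uab].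
    rewrite derive1E g'E mulr_ge0 ?expR_ge0 // -lerBlDr sub0r.
    by move: (df_le _ uab); rewrite ler_norml => /andP[].
  by rewrite /g fb0 mulr0 => /g_eq0.
Qed.

Section LinearODE.
Variables (R : realType) (n : nat) (A : R -> 'M[R]_n).

Definition is_sol (X : R -> 'M[R]_n) :=
  forall t i j, is_derive t (1 : R) (fun u => X u i j) ((A t *m X t) i j).

Lemma evol_op_sol Phi s : is_evol_op A Phi -> is_sol (Phi ^~ s).
Proof. by move=> hPhi t i j; have [_] := hPhi s; apply. Qed.

Lemma sol_mulmx X M : is_sol X -> is_sol (fun u => X u *m M).
Proof.
move=> X_sol t i j.
have -> : (fun u => (X u *m M) i j) = \sum_(k < n) M k j \*: (fun u => X u i k).
  apply/funext => u; rewrite fct_sumE mxE; apply: eq_bigr => k _.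
  by rewrite /= /GRing.scale /= mulrC.
apply: is_derive_eq; first by apply: is_derive_sum => k; apply: is_deriveZ.
rewrite mulmxA mxE; apply: eq_bigr => k _.
by rewrite /GRing.scale /= mulrC.
Qed.

Lemma sol_sub X Y : is_sol X -> is_sol Y -> is_sol (fun u => X u - Y u).
Proof.
move=> X_sol Y_sol t i j.
have -> : (fun u => (X u - Y u) i j) = (fun u => X u i j) - (fun u => Y u i j).
  by apply/funext => u; rewrite !mxE.
apply: is_derive_eq; first exact: is_deriveB.
by rewrite mulmxBr !mxE.
Qed.

Hypothesis A_continuous : forall i j, continuous (fun t => A t i j).

Definition Asum u := \sum_(i < n) \sum_(k < n) `|A u i k|.

Lemma Asum_continuous : continuous Asum.
Proof.
have -> : Asum = \sum_(i < n) \sum_(k < n) (fun u => `|A u i k|).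
  apply/funext => u; rewrite /Asum fct_sumE.
  by apply: eq_bigr => i _; rewrite fct_sumE.
have sum_cont m (F : 'I_m -> R -> R) :
    (forall i, continuous (F i)) -> continuous (\sum_i F i).
  move=> F_cont; elim/big_ind: _ => [|f g f_cont g_cont|i _]; first exact: cst_continuous.
    by move=> x; apply: continuousD; [exact: f_cont | exact: g_cont].
  exact: F_cont.
apply: (sum_cont _ _) => i; apply: (sum_cont _ _) => k x.
apply: (@continuous_comp _ _ _ (fun u => A u i k) Num.norm); first exact: A_continuous.
exact: norm_continuous.
Qed.

Section Energy.
Variable X : R -> 'M[R]_n.
Hypothesis X_sol : is_sol X.

Definition energy u := \sum_(i < n) \sum_(j < n) X u i j ^+ 2.
Definition energy' u := \sum_(i < n) \sum_(j < n) 2 * X u i j * (A u *m X u) i j.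

Lemma energy_derive u : is_derive u (1 : R) energy (energy' u).
Proof.
have -> : energy = \sum_(i < n) \sum_(j < n) (fun u => X u i j) ^+ 2.
  apply/funext => v; rewrite /energy fct_sumE.
  by apply: eq_bigr => i _; rewrite fct_sumE.
apply: is_derive_sum => i; apply: is_derive_sum => j.
apply: is_derive_eq; first exact: is_deriveX (X_sol u i j).
by rewrite /GRing.scale /= expr1; ring.
Qed.

Lemma energy_ge0 u : 0 <= energy u.
Proof. by apply: sumr_ge0 => i _; apply: sumr_ge0 => j _; apply: sqr_ge0. Qed.

Lemma sqr_le_energy u i j : X u i j ^+ 2 <= energy u.
Proof.
rewrite /energy (bigD1 i) //= (bigD1 j) //= -addrA lerDl.
rewrite addr_ge0 ?sumr_ge0 // => k _; rewrite ?sqr_ge0 ?sumr_ge0 // => l _.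
exact: sqr_ge0.
Qed.

Lemma mul_le_energy u i j k l : `|X u i j| * `|X u k l| <= energy u.
Proof.
have amgm : `|X u i j| * `|X u k l| *+ 2 <= X u i j ^+ 2 + X u k l ^+ 2.
  rewrite -[X u i j ^+ 2]real_normK ?num_real // -[X u k l ^+ 2]real_normK ?num_real //.
  have := sqr_ge0 (`|X u i j| - `|X u k l|); rewrite -mulr_natr; nra.
have := le_trans amgm (lerD (sqr_le_energy u i j) (sqr_le_energy u k l)).
by rewrite -mulr2n lerMn2r.
Qed.

Lemma energy_eq0 u : energy u = 0 -> X u = 0.
Proof.
move=> Eu; apply/matrixP => i j; rewrite mxE; apply/eqP; rewrite -sqrf_eq0; apply/eqP.
by apply: le_anti; rewrite sqr_ge0 andbT -Eu sqr_le_energy.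
Qed.

Lemma energy'_le u : `|energy' u| <= 2 * n%:R * Asum u * energy u.
Proof.
have -> : 2 * n%:R * Asum u * energy u =
    \sum_(i < n) \sum_(j < n) 2 * (\sum_(k < n) `|A u i k|) * energy u.
  under eq_bigr => i _ do rewrite sumr_const card_ord.
  by rewrite sumrMnl -mulr_suml -mulr_sumr /Asum -mulr_natr; ring.
apply: le_trans (ler_norm_sum _ _ _) (ler_sum _ _) => i _.
apply: le_trans (ler_norm_sum _ _ _) (ler_sum _ _) => j _.
rewrite !normrM ger0_norm // -mulrA -[2 * _ * _]mulrA ler_wpM2l // mxE.
apply: le_trans (ler_wpM2l (normr_ge0 _) (ler_norm_sum _ _ _)) _.
rewrite mulr_sumr mulr_suml ler_sum // => k _.
by rewrite normrM mulrCA ler_wpM2l ?mul_le_energy.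
Qed.

Lemma energy_eq0_interval a b : a <= b ->
  (energy a = 0 -> energy b = 0) /\ (energy b = 0 -> energy a = 0).
Proof.
move=> ab; have [c _ c_max] := EVT_max ab (continuous_subspaceT Asum_continuous).
apply: (derive_le_mul_eq0 (c := 2 * n%:R * Asum c) ab energy_derive energy_ge0).
move=> u; rewrite in_itv /= => /andP[au ub].
apply: le_trans (energy'_le u) (ler_wpM2r (energy_ge0 u) _).
by rewrite ler_wpM2l ?mulr_ge0 // c_max // in_itv /= (ltW au) (ltW ub).
Qed.

End Energy.

Lemma sol_eq0 X s t : is_sol X -> X s = 0 -> X t = 0.
Proof.
move=> X_sol Xs; apply: (energy_eq0 (X := X)).
have Es : energy X s = 0.
  by apply: big1 => i _; apply: big1 => j _; rewrite Xs mxE expr0n.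
have [st|ts] := lerP s t; first by have [+ _] := energy_eq0_interval X_sol st; apply.
by have [_] := energy_eq0_interval X_sol (ltW ts); apply.
Qed.

Lemma evol_op_cocycle Phi :
  is_evol_op A Phi -> forall t s r, Phi t s *m Phi s r = Phi t r.
Proof.
move=> hPhi t s r; apply/eqP; rewrite -subr_eq0; apply/eqP.
have := sol_sub (sol_mulmx (Phi s r) (evol_op_sol s hPhi)) (evol_op_sol r hPhi).
move/sol_eq0 => /(_ s t) /=; apply.
by have [-> _] := hPhi s; rewrite mul1mx subrr.
Qed.

Lemma evol_op_scale Phi Psi (w c : R -> R) :
  is_evol_op A Phi -> (forall t, 0 < w t) ->
  (forall t, is_derive t (1 : R) w (w t * c t)) ->
  is_evol_op (fun t => A t - c t *: 1%:M) Psi ->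
  forall t s, Phi t s = (w t / w s) *: Psi t s.
Proof.
move=> hPhi w_gt0 w_der hPsi t s.
have wPsi_sol : is_sol (fun u => w u *: Psi u s).
  move=> u i j; have [_ Psi_der] := hPsi s.
  have -> : (fun v => (w v *: Psi v s) i j) = (fun v => w v * Psi v s i j).
    by apply/funext => v; rewrite !mxE.
  have := is_deriveM (w_der u) (Psi_der u i j); move/is_derive_eq; apply.
  rewrite -scalemxAr [in RHS]mxE mulmxBl scalemx1 mul_scalar_mx !mxE /GRing.scale /=.
  by ring.
have := sol_sub wPsi_sol (sol_mulmx (w s)%:M (evol_op_sol s hPhi)).
move/sol_eq0 => /(_ s t) /=; rewrite !mul_mx_scalar.
have [-> _] := hPsi s; have [-> _] := hPhi s.
move=> /(_ (subrr _)) /eqP; rewrite subr_eq0 => /eqP wPsi.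
by rewrite mulrC -scalerA wPsi scalerA mulVf ?scale1r ?gt_eqF.
Qed.

End LinearODE.

Lemma powR_divMr (R : realType) (x y a b : R) : 0 < x -> 0 < y ->
  (x / y) `^ a * y `^ b = x `^ a * y `^ (b - a).
Proof.
move=> x_gt0 y_gt0; rewrite powRM ?invr_ge0 ?ltW // -mulrA; congr (_ * _).
have -> : y^-1 `^ a = (y `^ a)^-1.
  by rewrite /powR invr_eq0 gt_eqF // lnV ?posrE // mulrN expRN.
by rewrite powRB ?(gt_eqF y_gt0) ?implybT // mulrC.
Qed.

Lemma le_mul_cvg0 (R : realType) (T : Type) (F : set_system T) {FF : ProperFilter F}
  (a c : R) (h : T -> R) :
  h @ F --> 0 -> (\forall t \near F, a <= c * h t) -> a <= 0.
Proof.
move=> h0 a_le; have ch0 : (fun t => c * h t) @ F --> 0.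
  by rewrite -(mulr0 c); apply: cvgM h0; apply: cvg_cst.
by rewrite -(cvg_lim _ ch0) //; apply: limr_ge => //; apply: cvgP ch0.
Qed.

Lemma cvg_at_right0 (R : realType) (T : Type) (F : set_system T) {FF : Filter F}
  (f : T -> R) : (forall t, 0 < f t) -> f @ F --> 0 -> f @ F --> 0^'+.
Proof.
move=> f_gt0 f0 A /f0 fA.
by apply: (@filterS _ F _ [set t | 0 < f t -> A (f t)]) fA => t; apply; apply: f_gt0.
Qed.

Section GrowthRate.
Variables (R : realType) (mu : R -> R).
Hypothesis hmu : growth_rate mu.

Lemma growth_rate_gt0 t : 0 < mu t. Proof. by have [_ []] := hmu. Qed.
Lemma growth_rate0 : mu 0 = 1. Proof. by have [_ [_ []]] := hmu. Qed.

Lemma growth_rate_le s t : s <= t -> mu s <= mu t.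
Proof. by have [mu_lt _] := hmu; rewrite le_eqVlt => /predU1P[->|/mu_lt/ltW]. Qed.

Lemma powR_growth_rate_cvg0_pinfty q : 0 < q -> mu t `^ (- q) @[t --> +oo] --> 0.
Proof.
move=> q_gt0; have [_ [_ [_ [mu_oo _]]]] := hmu.
have muV0 : (fun t => (mu t)^-1) @ +oo --> 0.
  by apply/gtr0_cvgV0 => //; apply: nearW => t; apply: growth_rate_gt0.
have muV_gt0 t : 0 < (mu t)^-1 by rewrite invr_gt0 growth_rate_gt0.
have -> : (fun t => mu t `^ (- q)) = (fun u : R => u `^ q) \o (fun t => (mu t)^-1).
  apply/funext => t /=.
  by rewrite -powR_inv1 ?ltW ?growth_rate_gt0 // -powRrM mulN1r.
exact: cvg_comp _ _ (cvg_at_right0 muV_gt0 muV0) (powR_cvg0 q_gt0).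
Qed.

Lemma powR_growth_rate_cvg0_ninfty q : 0 < q -> mu t `^ q @[t --> -oo] --> 0.
Proof.
move=> q_gt0; have [_ [_ [_ [_ mu_0]]]] := hmu.
exact: cvg_comp _ _ (cvg_at_right0 growth_rate_gt0 mu_0) (powR_cvg0 q_gt0).
Qed.

End GrowthRate.

Definition orbit_bounded (R : realType) (n : nat) (N : 'cV[R]_n -> R)
  (Psi : R -> R -> 'M[R]_n) (D : set R) (s : R) (x : 'cV[R]_n) :=
  exists C, forall t, D t -> N (Psi t s *m x) <= C.

Lemma orbit_bounded_sub (R : realType) (n : nat) (N : 'cV[R]_n -> R) Psi D s x y :
  is_norm N -> orbit_bounded N Psi D s x -> orbit_bounded N Psi D s y ->
  orbit_bounded N Psi D s (x - y).
Proof.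
move=> hN [C hC] [C' hC']; exists (C + C') => t Dt.
by rewrite mulmxBr (le_trans (ler_NB hN _ _)) // lerD ?hC ?hC'.
Qed.

Section Dichotomy.
Variables (R : realType) (n : nat) (N : 'cV[R]_n -> R) (mu : R -> R).
Variables (Psi : R -> R -> 'M[R]_n) (P : R -> 'M[R]_n).
Hypotheses (n_gt0 : (0 < n)%N) (hN : is_norm N) (hmu : growth_rate mu).
Hypothesis Psi_id : forall s, Psi s s = 1%:M.
Hypothesis Psi_cocycle : forall t s r, Psi t s *m Psi s r = Psi t r.
Hypothesis P_idem : forall t, P t *m P t = P t.
Hypothesis P_Psi : forall t s, P t *m Psi t s = Psi t s *m P s.
Variables (K alpha beta theta nu : R).
Hypotheses (K_ge1 : 1 <= K) (alpha_lt0 : alpha < 0) (beta_gt0 : 0 < beta).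
Hypotheses (alpha_theta_lt0 : alpha + theta < 0) (beta_nu_gt0 : 0 < beta - nu).
Hypothesis stable : forall t s, s <= t ->
  opnorm N (Psi t s *m P s) <=
  K * (mu t / mu s) `^ alpha * mu s `^ (sgnR s * theta).
Hypothesis unstable : forall t s, t <= s ->
  opnorm N (Psi t s *m (1%:M - P s)) <=
  K * (mu t / mu s) `^ beta * mu s `^ (sgnR s * nu).

Let mu_gt0 := growth_rate_gt0 hmu.
Let K_ge0 : 0 <= K := le_trans ler01 K_ge1.

Lemma stable_le t s x : s <= t ->
  N (Psi t s *m (P s *m x)) <=
  K * (mu t / mu s) `^ alpha * mu s `^ (sgnR s * theta) * N x.
Proof.
move=> st; rewrite mulmxA; apply: le_trans (opnorm_le hN n_gt0 _ _) _.
by rewrite ler_wpM2r ?N_ge0 ?stable.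
Qed.

Lemma unstable_le t s x : t <= s ->
  N (Psi t s *m ((1%:M - P s) *m x)) <=
  K * (mu t / mu s) `^ beta * mu s `^ (sgnR s * nu) * N x.
Proof.
move=> ts; rewrite mulmxA; apply: le_trans (opnorm_le hN n_gt0 _ _) _.
by rewrite ler_wpM2r ?N_ge0 ?unstable.
Qed.

Lemma im_P_fwd_bounded s x : orbit_bounded N Psi [set t | 0 <= t] s (P s *m x).
Proof.
pose z := Psi 0 s *m x; exists (K * N z) => t t_ge0.
have -> : Psi t s *m (P s *m x) = Psi t 0 *m (P 0 *m z).
  by rewrite /z (mulmxA (P 0)) P_Psi -(mulmxA (Psi 0 s)) [RHS]mulmxA Psi_cocycle.
apply: le_trans (stable_le _ t_ge0) _.
rewrite (growth_rate0 hmu) divr1 /sgnR sgr0 mul0r powRr0 mulr1 ler_wpM2r ?N_ge0 //.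
have mu_ge1 : 1 <= mu t by rewrite -(growth_rate0 hmu) (growth_rate_le hmu).
by rewrite ler_piMr // -[leRHS](powRr0 (mu t)) (ler_powR mu_ge1) // ltW.
Qed.

Lemma ker_P_bwd_bounded s x : P s *m x = 0 -> orbit_bounded N Psi [set t | t <= 0] s x.
Proof.
move=> Px; pose z := Psi 0 s *m x; exists (K * N z) => t t_le0.
have -> : Psi t s *m x = Psi t 0 *m ((1%:M - P 0) *m z).
  rewrite mulmxBl mul1mx /z mulmxA P_Psi -mulmxA Px mulmx0 subr0.
  by rewrite mulmxA Psi_cocycle.
apply: le_trans (unstable_le _ t_le0) _.
rewrite (growth_rate0 hmu) divr1 /sgnR sgr0 mul0r powRr0 mulr1 ler_wpM2r ?N_ge0 //.
have mu_le1 : mu t <= 1 by rewrite -(growth_rate0 hmu) (growth_rate_le hmu).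
have one_pow : 1 `^ beta = 1 :> R by rewrite powR1.
rewrite ler_piMr // -[leRHS]one_pow; apply: ge0_ler_powR => //; first exact: ltW.
  by rewrite nnegrE ltW.
by rewrite nnegrE.
Qed.

Lemma fwd_bounded_ker_P s y : P s *m y = 0 ->
  orbit_bounded N Psi [set t | 0 <= t] s y -> y = 0.
Proof.
move=> Py [C hC]; apply: (N0_eq0 hN); apply/le_anti; rewrite (N_ge0 hN) andbT.
apply: (le_mul_cvg0 (c := K * mu s `^ beta * C)
  (powR_growth_rate_cvg0_pinfty hmu beta_nu_gt0)).
near=> t.
have t_gt0 : 0 < t by near: t; apply: nbhs_pinfty_gt (num_real _).
have st : s <= t by near: t; apply: nbhs_pinfty_ge (num_real _).
have -> : y = Psi s t *m ((1%:M - P t) *m (Psi t s *m y)).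
  rewrite mulmxBl mul1mx mulmxA P_Psi -mulmxA Py mulmx0 subr0.
  by rewrite mulmxA Psi_cocycle Psi_id mul1mx.
apply: le_trans (unstable_le _ st) _.
rewrite /sgnR gtr0_sg // mul1r -(mulrA K) powR_divMr //.
have -> : K * mu s `^ beta * C * mu t `^ (- (beta - nu)) =
    K * (mu s `^ beta * mu t `^ (nu - beta)) * C by rewrite opprB; ring.
apply: ler_wpM2l; last exact: hC (ltW t_gt0).
by rewrite !mulr_ge0 ?powR_ge0.
Unshelve. all: by end_near.
Qed.

Lemma bwd_bounded_im_P s y : P s *m y = y ->
  orbit_bounded N Psi [set t | t <= 0] s y -> y = 0.
Proof.
move=> Py [C hC]; apply: (N0_eq0 hN); apply/le_anti; rewrite (N_ge0 hN) andbT.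
have q_gt0 : 0 < - (alpha + theta) by rewrite oppr_gt0.
apply: (le_mul_cvg0 (c := K * mu s `^ alpha * C)
  (powR_growth_rate_cvg0_ninfty hmu q_gt0)).
near=> t.
have t_lt0 : t < 0 by near: t; apply: nbhs_ninfty_lt (num_real _).
have ts : t <= s by near: t; apply: nbhs_ninfty_le (num_real _).
have -> : y = Psi s t *m (P t *m (Psi t s *m y)).
  by rewrite (mulmxA (P t)) P_Psi -mulmxA Py mulmxA Psi_cocycle Psi_id mul1mx.
apply: le_trans (stable_le _ ts) _.
rewrite /sgnR ltr0_sg // mulN1r -(mulrA K) powR_divMr //.
have -> : K * mu s `^ alpha * C * mu t `^ (- (alpha + theta)) =
    K * (mu s `^ alpha * mu t `^ (- theta - alpha)) * C.
  by rewrite opprD addrC; ring.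
apply: ler_wpM2l; last exact: hC (ltW t_lt0).
by rewrite !mulr_ge0 ?powR_ge0.
Unshelve. all: by end_near.
Qed.

Lemma orbit_bounded_im_ker s x :
  (orbit_bounded N Psi [set t | 0 <= t] s x <-> exists eta, x = P s *m eta) /\
  (orbit_bounded N Psi [set t | t <= 0] s x <-> P s *m x = 0).
Proof.
have Qx : P s *m (x - P s *m x) = 0 by rewrite mulmxBr mulmxA P_idem subrr.
split; split=> [x_bd|]; last exact: ker_P_bwd_bounded.
- exists x; apply/eqP; rewrite -subr_eq0; apply/eqP.
  apply: (fwd_bounded_ker_P Qx).
  exact: orbit_bounded_sub hN x_bd (im_P_fwd_bounded _ _).
- by move=> [eta ->]; apply: im_P_fwd_bounded.
- apply: (bwd_bounded_im_P (s := s)); first by rewrite mulmxA P_idem.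
  have := orbit_bounded_sub hN x_bd (ker_P_bwd_bounded Qx).
  by rewrite opprB addrC subrK.
Qed.

End Dichotomy.

Lemma is_derive_powR_comp (R : realType) (mu : R -> R) (gamma t : R) :
  0 < mu t -> derivable mu t 1 ->
  is_derive t (1 : R) (fun u => mu u `^ gamma)
    (mu t `^ gamma * (gamma * 'D_1 mu t / mu t)).
Proof.
move=> mu_gt0 mu_der.
have := is_derive1_comp (derivableP mu_der) (is_derive1_powR gamma mu_gt0).
move/is_derive_eq; apply.
rewrite powRB ?(gt_eqF mu_gt0) ?implybT // powRr1 ?ltW //.
by field; rewrite gt_eqF.
Qed.

Section Rescaling.
Variables (R : realType) (n : nat) (N : 'cV[R]_n -> R) (mu : R -> R) (gamma : R).
Variables (Phi Psi : R -> R -> 'M[R]_n).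
Hypotheses (hN : is_norm N) (mu_gt0 : forall t, 0 < mu t).
Hypothesis Phi_scale : forall t s, Phi t s = (mu t `^ gamma / mu s `^ gamma) *: Psi t s.

Let w_gt0 t : 0 < mu t `^ gamma. Proof. exact: powR_gt0. Qed.

Lemma weighted_orbit_boundedE D s x :
  (exists C, forall t, D t -> N (Phi t s *m x) * mu t `^ (- gamma) <= C) <->
  orbit_bounded N Psi D s x.
Proof.
have weightE t : N (Phi t s *m x) * mu t `^ (- gamma) = N (Psi t s *m x) / mu s `^ gamma.
  rewrite Phi_scale -scalemxAl NZ // ger0_norm ?divr_ge0 ?ltW // powRN.
  by field; rewrite !gt_eqF.
split=> [[C hC]|[C hC]].
- by exists (C * mu s `^ gamma) => t Dt; rewrite -ler_pdivrMr // -weightE hC.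
- by exists (C / mu s `^ gamma) => t Dt; rewrite weightE ler_pM2r ?invr_gt0 ?hC.
Qed.

Lemma U_set_rescale :
  U_set N mu Phi gamma = [set p | orbit_bounded N Psi [set t | 0 <= t] p.1 p.2].
Proof. by apply/seteqP; split=> -[s x] /weighted_orbit_boundedE. Qed.

Lemma V_set_rescale :
  V_set N mu Phi gamma = [set p | orbit_bounded N Psi [set t | t <= 0] p.1 p.2].
Proof. by apply/seteqP; split=> -[s x] /weighted_orbit_boundedE. Qed.

Lemma rescaled_cocycle : (forall t s r, Phi t s *m Phi s r = Phi t r) ->
  forall t s r, Psi t s *m Psi s r = Psi t r.
Proof.
have PsiE t s : Psi t s = (mu s `^ gamma / mu t `^ gamma) *: Phi t s.
  rewrite Phi_scale scalerA (_ : _ * _ = 1) ?scale1r //.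
  by field; rewrite !gt_eqF.
move=> Phi_cocycle t s r.
rewrite !PsiE -scalemxAl -scalemxAr Phi_cocycle scalerA.
by congr (_ *: _); field; rewrite !gt_eqF.
Qed.

End Rescaling.

Lemma fiber_dsum_im_ker (R : realType) (n : nat) (P : R -> 'M[R]_n) :
  (forall t, P t *m P t = P t) ->
  fiber_dsum [set p | exists eta, p.2 = P p.1 *m eta] [set p | P p.1 *m p.2 = 0] = setT.
Proof.
move=> P_idem; apply/seteqP; split=> // -[s x] _; split=> /=.
  by move=> y [eta ->] /=; rewrite mulmxA P_idem.
exists (P s *m x), (x - P s *m x); split; first by exists x.
by rewrite /= mulmxBr mulmxA P_idem subrr addrC subrK.
Qed.

Unset Implicit Arguments. Set Strict Implicit.

Theorem mainTheorem5 (R : realType) (n : nat) (N : 'cV[R]_n -> R)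
  (A : R -> 'M[R]_n) (Phi Psi : R -> R -> 'M[R]_n) (P : R -> 'M[R]_n)
  (mu : R -> R) (gamma : R) :
  (0 < n)%N ->
  is_norm N ->
  (forall i j, continuous (fun t => A t i j)) ->
  is_evol_op A Phi ->
  diff_growth_rate mu ->
  is_evol_op (fun t => A t - (gamma * ('D_1 mu t) / mu t) *: 1%:M) Psi ->
  nonuniform_mu_dichotomy N mu Psi P ->
  U_set N mu Phi gamma = [set p | exists eta, p.2 = P p.1 *m eta] /\
  V_set N mu Phi gamma = [set p | P p.1 *m p.2 = 0] /\
  fiber_dsum (U_set N mu Phi gamma) (V_set N mu Phi gamma) = setT.
Proof.
move=> n_gt0 hN hA hPhi [mu_rate mu_der] hPsi [P_idem [P_Psi [K [al [be [th [nu
  [K_ge1 [al_lt0 [be_gt0 [_ [_ [al_th_lt0 [be_nu_gt0 [stable unstable]]]]]]]]]]]]]]].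
have mu_gt0 := growth_rate_gt0 mu_rate.
have Phi_scale := evol_op_scale hA hPhi (fun t => powR_gt0 gamma (mu_gt0 t))
  (fun t => is_derive_powR_comp gamma (mu_gt0 t) (mu_der t)) hPsi.
have Psi_id s : Psi s s = 1%:M by have [] := hPsi s.
have Psi_cocycle := rescaled_cocycle mu_gt0 Phi_scale (evol_op_cocycle hA hPhi).
have orbitE := orbit_bounded_im_ker n_gt0 hN mu_rate Psi_id Psi_cocycle P_idem P_Psi
  K_ge1 al_lt0 be_gt0 al_th_lt0 be_nu_gt0 stable unstable.
have U_eq : U_set N mu Phi gamma = [set p | exists eta, p.2 = P p.1 *m eta].
  rewrite (U_set_rescale hN mu_gt0 Phi_scale).
  by apply/funext => -[s x]; apply/propext; exact: (orbitE s x).1.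
have V_eq : V_set N mu Phi gamma = [set p | P p.1 *m p.2 = 0].
  rewrite (V_set_rescale hN mu_gt0 Phi_scale).
  by apply/funext => -[s x]; apply/propext; exact: (orbitE s x).2.
by rewrite U_eq V_eq; split; [|split]; last exact: fiber_dsum_im_ker.
Qed.
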